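(* There exists an invertible matrix $N\in\mathbb C^{n\times n}$ such that $$B(x_1,x_2,x_3)=x_3\,N\,S(x_1,x_2,x_3).$$
   Context: Let $a,b,c\in\mathbb C[s,v]$ be homogeneous of the same degree $n\ge3$, $\gcd(a,b,c)=1$, with $\phi=(a:b:c)$ birational onto its image. Let $p,q$ be a $\mu$-basis: a homogeneous basis of degrees $\mu\le n-\mu$ of the free syzygy module of $(a,b,c)$. $B(x_1,x_2,x_3)=(B_{i,j})_{0\le i,j\le n-1}\in\mathbb C[x_1,x_2,x_3]^{n\times n}$ is the Bézout matrix of $a(s,1)x_3-c(s,1)x_1$ and $b(s,1)x_3-c(s,1)x_2$, defined by $\sum_{i,j}B_{i,j}s^it^j=\frac{1}{s-t}\big[(a(s,1)x_3-c(s,1)x_1)(b(t,1)x_3-c(t,1)x_2)-(a(t,1)x_3-c(t,1)x_1)(b(s,1)x_3-c(s,1)x_2)\big]$. $S(x_1,x_2,x_3)$ is the $n\times n$ Sylvester matrix with respect to $(s,v)$ of $\sum_ix_ip_i(s,v)$ and $\sum_ix_iq_i(s,v)$, whose rows are the coefficient vectors, in the monomial basis of $\mathbb C[s,v]_{n-1}$, of $v^{n-\mu-1-k}s^k\sum_ix_ip_i$ ($0\le k\le n-\mu-1$) and $v^{\mu-1-k}s^k\sum_ix_iq_i$ ($0\le k\le\mu-1$), the rows of $B$ being likewise indexed so that row $i$ is the coefficient vector of $\sum_jB_{i,j}(\cdot)$ in the same monomial basis. *)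

(* Bivariate polynomials C[s,v] are modelled as
   {poly {poly R}}: the outer variable is v, the inner (coefficient) one is s. *)
From HB Require Import structures.
From mathcomp Require Import all_boot all_order all_algebra.
Set Implicit Arguments. Unset Strict Implicit. Unset Printing Implicit Defensive.
Import GRing.Theory.
Local Open Scope ring_scope.

Definition coef2 (R : nzRingType) (P : {poly {poly R}}) (i j : nat) : R :=
  (P`_j)`_i.

Definition homog (R : nzRingType) (d : nat) (P : {poly {poly R}}) : Prop :=
  forall i j, coef2 P i j != 0 -> (i + j)%N = d.

Definition pdvd (R : comNzRingType) (h f : {poly {poly R}}) : Prop :=
  exists g, f = h * g.

Definition coprime3 (R : idomainType) (a b c : {poly {poly R}}) : Prop :=
  forall h, pdvd h a -> pdvd h b -> pdvd h c -> h \is a GRing.unit.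

Definition ev2 (R : comNzRingType) (P : {poly {poly R}}) (s0 v0 : R) : R :=
  (P.[v0%:P]).[s0].

(* phi = (a:b:c) : P^1 -> P^2 is birational onto its image, i.e. generically
   injective: outside a finite set of parameters (s:1), two parameters with
   the same image point (proportional coordinate vectors) coincide. *)
Definition birational_param (R : fieldType) (a b c : {poly {poly R}}) : Prop :=
  exists E : seq R, forall s1 s2 : R, s1 \notin E -> s2 \notin E ->
    let a1 := ev2 a s1 1 in let b1 := ev2 b s1 1 in let c1 := ev2 c s1 1 in
    let a2 := ev2 a s2 1 in let b2 := ev2 b s2 1 in let c2 := ev2 c s2 1 in
    a1 * b2 = a2 * b1 -> a1 * c2 = a2 * c1 -> b1 * c2 = b2 * c1 -> s1 = s2.

Definition abc (R : nzRingType) (a b c : {poly {poly R}}) : 'I_3 -> {poly {poly R}} :=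
  fun i => nth 0 [:: a; b; c] i.

Definition syz (R : comNzRingType) (f r : 'I_3 -> {poly {poly R}}) : Prop :=
  \sum_(i < 3) r i * f i = 0.

Definition mu_basis (R : comNzRingType) (n mu : nat)
    (f p q : 'I_3 -> {poly {poly R}}) : Prop :=
  [/\ (mu <= n - mu)%N,
      (forall i, homog mu (p i)) /\ (forall i, homog (n - mu) (q i)),
      syz f p /\ syz f q,
      (forall r, syz f r -> exists h1 h2, forall i, r i = h1 * p i + h2 * q i) &
      (forall h1 h2, (forall i, h1 * p i + h2 * q i = 0) -> h1 = 0 /\ h2 = 0)].

(* Bezoutian (F(s)G(t) - F(t)G(s)) / (s - t) in R[s][t] (t outer) *)
Definition bezout_poly (R : idomainType) (F G : {poly R}) : {poly {poly R}} :=
  (F%:P * map_poly polyC G - map_poly polyC F * G%:P) %/ (('X : {poly R})%:P - 'X).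

Definition bezout_mx (R : idomainType) (n : nat) (F G : {poly R}) : 'M[R]_n :=
  \matrix_(i < n, j < n) coef2 (bezout_poly F G) i j.

Definition lin (R : comNzRingType) (x : 'I_3 -> R) (P : 'I_3 -> {poly {poly R}}) :
  {poly {poly R}} := \sum_(i < 3) ((x i)%:P)%:P * P i.

(* Sylvester matrix: rows v^(n-mu-1-k) s^k (sum x_i p_i), k < n - mu, then
   v^(mu-1-k) s^k (sum x_i q_i), k < mu; column j is the coefficient of
   s^j v^(n-1-j). *)
Definition sylv (R : comNzRingType) (n mu : nat) (p q : 'I_3 -> {poly {poly R}})
    (x : 'I_3 -> R) : 'M[R]_n :=
  \matrix_(r < n, j < n)
    let P := if (r < n - mu)%N
             then 'X^(n - mu - 1 - r) * ('X^r)%:P * lin x p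
             else 'X^(mu - 1 - (r - (n - mu))) * ('X^(r - (n - mu)))%:P * lin x q in
    coef2 P j (n - 1 - j).

(* Set f := (a, b, c) and P, Q := p, q at v = 1.  The cross product P x Q is
   orthogonal to the syzygies P and Q, hence parallel to f; as f is unimodular
   (gcd(a, b, c) = 1) and P x Q has degree at most n, P x Q = l f for a constant
   l != 0.  Lagrange's identity then rewrites the Bezout numerator
   F(s) G(t) - F(t) G(s) as (s - t) (x_3 / l) (Lp(t) D(s,t).Q(t) - Lq(t) D(s,t).P(t)),
   where D = (f(s) - f(t)) / (s - t) and Lp, Lq = sum_i x_i p_i, sum_i x_i q_i are
   the polynomials whose shifts form the Sylvester matrix; comparing coefficients
   gives B = x_3 N S.  A left kernel vector of N would produce polynomials
   orthogonal to P and Q, hence parallel to f, but of degree < n, hence zero, and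
   the resulting triangular Hankel system forces the vector to vanish. *)

From mathcomp Require Import all_boot all_order all_algebra.
From mathcomp Require Import ring zify.
Set Implicit Arguments. Unset Strict Implicit. Unset Printing Implicit Defensive.
Import GRing.Theory.
Local Open Scope ring_scope.

Lemma sum_ord3 (V : nmodType) (F : 'I_3 -> V) :
  \sum_(i < 3) F i = F 0%:R + F 1%:R + F 2%:R.
Proof. by rewrite !big_ord_recr big_ord0 /= add0r; congr (F _ + F _ + F _); apply/val_inj. Qed.

Lemma forall_ord3 (P : 'I_3 -> Prop) : P 0%:R -> P 1%:R -> P 2%:R -> forall k, P k.
Proof.
move=> h0 h1 h2 [[|[|[|//]]] hk].
- by have -> : Ordinal hk = 0%:R by apply/val_inj.
- by have -> : Ordinal hk = 1%:R by apply/val_inj.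
- by have -> : Ordinal hk = 2%:R by apply/val_inj.
Qed.

Section CrossProduct.
Variable T : comNzRingType.

Lemma cross_parallel (E0 E1 E2 P0 P1 P2 Q0 Q1 Q2 : T) :
  E0 * P0 + E1 * P1 + E2 * P2 = 0 -> E0 * Q0 + E1 * Q1 + E2 * Q2 = 0 ->
  [/\ (P1 * Q2 - P2 * Q1) * E1 = (P2 * Q0 - P0 * Q2) * E0,
      (P1 * Q2 - P2 * Q1) * E2 = (P0 * Q1 - P1 * Q0) * E0 &
      (P2 * Q0 - P0 * Q2) * E2 = (P0 * Q1 - P1 * Q0) * E1].
Proof.
set EP := E0 * P0 + _ + _; set EQ := E0 * Q0 + _ + _ => hP hQ; split.
- have -> : (P1 * Q2 - P2 * Q1) * E1 = (P2 * Q0 - P0 * Q2) * E0 + (Q2 * EP - P2 * EQ).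
    by rewrite /EP /EQ; ring.
  by rewrite hP hQ !mulr0 subr0 addr0.
- have -> : (P1 * Q2 - P2 * Q1) * E2 = (P0 * Q1 - P1 * Q0) * E0 + (P1 * EQ - Q1 * EP).
    by rewrite /EP /EQ; ring.
  by rewrite hP hQ !mulr0 subr0 addr0.
- have -> : (P2 * Q0 - P0 * Q2) * E2 = (P0 * Q1 - P1 * Q0) * E1 + (Q0 * EP - P0 * EQ).
    by rewrite /EP /EQ; ring.
  by rewrite hP hQ !mulr0 subr0 addr0.
Qed.

Lemma unimodular_parallel (u0 u1 u2 f0 f1 f2 X0 X1 X2 : T) :
  u0 * f0 + u1 * f1 + u2 * f2 = 1 ->
  X0 * f1 = X1 * f0 -> X0 * f2 = X2 * f0 -> X1 * f2 = X2 * f1 ->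
  [/\ X0 = (u0 * X0 + u1 * X1 + u2 * X2) * f0,
      X1 = (u0 * X0 + u1 * X1 + u2 * X2) * f1 &
      X2 = (u0 * X0 + u1 * X1 + u2 * X2) * f2].
Proof.
move=> hu h01 h02 h12; split.
- transitivity (u0 * X0 * f0 + u1 * (X0 * f1) + u2 * (X0 * f2)).
    by rewrite -[LHS]mulr1 -hu; ring.
  by rewrite h01 h02; ring.
- transitivity (u0 * (X0 * f1) + u1 * X1 * f1 + u2 * (X1 * f2)).
    by rewrite -[LHS]mulr1 -hu h01; ring.
  by rewrite h12; ring.
- transitivity (u0 * (X0 * f2) + u1 * (X1 * f2) + u2 * X2 * f2).
    by rewrite -[LHS]mulr1 -hu h02 h12; ring.
  by ring.
Qed.

Lemma cross_eq0_syz (P Q : 'I_3 -> T) :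
  P 1%:R * Q 2%:R - P 2%:R * Q 1%:R = 0 -> P 2%:R * Q 0%:R - P 0%:R * Q 2%:R = 0 ->
  P 0%:R * Q 1%:R - P 1%:R * Q 0%:R = 0 ->
  forall i k, Q i * P k - P i * Q k = 0.
Proof.
move=> h0 h1 h2; do 2 apply: forall_ord3;
  first [ ring | by rewrite -h0; ring | by rewrite -h1; ring | by rewrite -h2; ring
        | by rewrite -oppr0 -h0; ring | by rewrite -oppr0 -h1; ring
        | by rewrite -oppr0 -h2; ring ].
Qed.

(* The left side is l x_2 (x . (fs x ft)); substitute l ft = P x Q and expand
   fs x (P x Q) = (fs . Q) P - (fs . P) Q. *)
Lemma bezoutian_cross (x0 x1 x2 fs0 fs1 fs2 ft0 ft1 ft2 P0 P1 P2 Q0 Q1 Q2 l : T) :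
  l * ft0 = P1 * Q2 - P2 * Q1 -> l * ft1 = P2 * Q0 - P0 * Q2 ->
  l * ft2 = P0 * Q1 - P1 * Q0 ->
  l * ((x2 * fs0 - x0 * fs2) * (x2 * ft1 - x1 * ft2)
       - (x2 * ft0 - x0 * ft2) * (x2 * fs1 - x1 * fs2))
  = x2 * ((x0 * P0 + x1 * P1 + x2 * P2) * (fs0 * Q0 + fs1 * Q1 + fs2 * Q2)
          - (x0 * Q0 + x1 * Q1 + x2 * Q2) * (fs0 * P0 + fs1 * P1 + fs2 * P2)).
Proof.
move=> h0 h1 h2.
transitivity (x2 * (x0 * (fs1 * (l * ft2) - fs2 * (l * ft1))
  + x1 * (fs2 * (l * ft0) - fs0 * (l * ft2)) + x2 * (fs0 * (l * ft1) - fs1 * (l * ft0)))).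
  by ring.
by rewrite h0 h1 h2; ring.
Qed.

Lemma divdiff_dot (st fs0 fs1 fs2 ft0 ft1 ft2 D0 D1 D2 Q0 Q1 Q2 : T) :
  st * D0 = fs0 - ft0 -> st * D1 = fs1 - ft1 -> st * D2 = fs2 - ft2 ->
  Q0 * ft0 + Q1 * ft1 + Q2 * ft2 = 0 ->
  st * (D0 * Q0 + D1 * Q1 + D2 * Q2) = fs0 * Q0 + fs1 * Q1 + fs2 * Q2.
Proof.
move=> h0 h1 h2 hQ.
transitivity (st * D0 * Q0 + st * D1 * Q1 + st * D2 * Q2); first by ring.
rewrite h0 h1 h2 -[RHS]subr0 -hQ; ring.
Qed.
End CrossProduct.

Section BivariateCoefficients.
Variable R : comNzRingType.
Implicit Types (P Q T : {poly {poly R}}) (g : {poly R}).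

Lemma coef2_ext P Q : (forall i j, coef2 P i j = coef2 Q i j) -> P = Q.
Proof. by move=> h; apply/polyP => j; apply/polyP => i; apply: h. Qed.

Lemma coef20 i j : coef2 (0 : {poly {poly R}}) i j = 0.
Proof. by rewrite /coef2 !coef0. Qed.

Lemma coef2D P Q i j : coef2 (P + Q) i j = coef2 P i j + coef2 Q i j.
Proof. by rewrite /coef2 !coefD. Qed.

Lemma coef2N P i j : coef2 (- P) i j = - coef2 P i j.
Proof. by rewrite /coef2 !coefN. Qed.

Lemma coef2B P Q i j : coef2 (P - Q) i j = coef2 P i j - coef2 Q i j.
Proof. by rewrite /coef2 !coefB. Qed.

Lemma coef2C g i j : coef2 g%:P i j = if j == 0%N then g`_i else 0.
Proof. by rewrite /coef2 coefC; case: eqP; rewrite ?coef0. Qed.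

Lemma coef2_map_polyC g i j : coef2 (map_poly polyC g) i j = if i == 0%N then g`_j else 0.
Proof. by rewrite /coef2 coef_map /= coefC. Qed.

Lemma coef2CM g P i j : coef2 (g%:P * P) i j = (g * P`_j)`_i.
Proof. by rewrite /coef2 coefCM. Qed.

Lemma coef2CCM (r : R) P i j : coef2 (r%:P%:P * P) i j = r * coef2 P i j.
Proof. by rewrite /coef2 !coefCM. Qed.

Lemma coef2XM P i j : coef2 ('X * P) i j = if j == 0%N then 0 else coef2 P i j.-1.
Proof. by rewrite /coef2 coefXM; case: eqP; rewrite ?coef0. Qed.

Lemma coef2_map_polyCM g P i j :
  coef2 (map_poly polyC g * P) i j = \sum_(r < j.+1) g`_(j - r) * coef2 P i r.
Proof.
rewrite /coef2 coefMr coef_sum; apply: eq_bigr => r _.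
by rewrite coef_map /= coefCM.
Qed.

Lemma coef2M P Q i j :
  coef2 (P * Q) i j = \sum_(j1 < j.+1) \sum_(i1 < i.+1)
     coef2 P i1 j1 * coef2 Q (i - i1) (j - j1).
Proof. by rewrite /coef2 coefM coef_sum; apply: eq_bigr => j1 _; rewrite coefM. Qed.

Lemma coef_horner1 T i : (T.[1])`_i = \sum_(j < size T) coef2 T i j.
Proof. by rewrite horner_coef coef_sum; apply: eq_bigr => j _; rewrite expr1n mulr1. Qed.

Lemma coef_horner1_homog d T i : homog d T ->
  (T.[1])`_i = if (i <= d)%N then coef2 T i (d - i) else 0.
Proof.
move=> hT; rewrite coef_horner1; case: leqP => hid; last first.
  rewrite big1 // => j _.
  by case: (eqVneq (coef2 T i j) 0) => // /hT; lia.
rewrite (eq_bigr (fun j : 'I_(size T) =>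
  if j == (d - i)%N :> nat then coef2 T i j else 0)) => [|j _]; last first.
  case: eqP => // hj; case: (eqVneq (coef2 T i j) 0) => // /hT hij.
  by case: hj; rewrite -hij addKn.
rewrite -big_mkcond big_ord1_eq; case: ltnP => // hs.
by rewrite /coef2 (leq_sizeP _ _ hs) // coef0.
Qed.

Lemma coef2_homog d T i j : homog d T ->
  coef2 T i j = if (i + j == d)%N then (T.[1])`_i else 0.
Proof.
move=> hT; case: eqP => [hd|hij].
  by rewrite (coef_horner1_homog i hT) -hd leq_addr addKn.
by case: (eqVneq (coef2 T i j) 0) => // /hT.
Qed.

Lemma size_horner1_homog d T : homog d T -> (size T.[1] <= d.+1)%N.
Proof. by move=> hT; apply/leq_sizeP => i hi; rewrite (coef_horner1_homog i hT) leqNgt hi. Qed.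

Lemma homog_horner1_eq0 d T : homog d T -> T.[1] = 0 -> T = 0.
Proof.
move=> hT h0; apply: coef2_ext => i j.
by rewrite (coef2_homog _ _ hT) h0 coef0 coef20; case: eqP.
Qed.

Lemma homogD d P Q : homog d P -> homog d Q -> homog d (P + Q).
Proof.
move=> hP hQ i j; rewrite coef2D.
by case: (eqVneq (coef2 P i j) 0) => [->|/hP //]; rewrite add0r => /hQ.
Qed.

Lemma homogN d P : homog d P -> homog d (- P).
Proof. by move=> hP i j; rewrite coef2N oppr_eq0 => /hP. Qed.

Lemma homogB d P Q : homog d P -> homog d Q -> homog d (P - Q).
Proof. by move=> hP hQ; apply: homogD => //; apply: homogN. Qed.

Lemma homogCCM d (r : R) P : homog d P -> homog d (r%:P%:P * P).
Proof.
move=> hP i j; rewrite coef2CCM => h; apply: hP.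
by apply: contraNneq h => ->; rewrite mulr0.
Qed.

Lemma homogM d1 d2 P Q : homog d1 P -> homog d2 Q -> homog (d1 + d2) (P * Q).
Proof.
move=> hP hQ i j; apply: contraNeq => hne.
rewrite coef2M big1 // => j1 _; rewrite big1 // => i1 _.
case: (eqVneq (coef2 P i1 j1) 0) => [->|/hP h1]; first by rewrite mul0r.
case: (eqVneq (coef2 Q (i - i1) (j - j1)) 0) => [->|/hQ h2]; first by rewrite mulr0.
have := ltn_ord i1; have := ltn_ord j1; move/eqP: hne; lia.
Qed.

Lemma homog_lin d (x : 'I_3 -> R) (P : 'I_3 -> {poly {poly R}}) :
  (forall k, homog d (P k)) -> homog d (lin x P).
Proof. by move=> hP; rewrite /lin sum_ord3; do ![apply: homogD | apply: homogCCM]. Qed.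

Lemma horner1_lin (x : 'I_3 -> R) (P : 'I_3 -> {poly {poly R}}) :
  (lin x P).[1] = (x 0%:R)%:P * (P 0%:R).[1] + (x 1%:R)%:P * (P 1%:R).[1]
                  + (x 2%:R)%:P * (P 2%:R).[1].
Proof. by rewrite /lin sum_ord3 !hornerD !hornerM !hornerC. Qed.

Lemma coef2_shift_homog d T A r j k : homog d T -> (A + r + d = j + k)%N ->
  coef2 ('X^A * ('X^r)%:P * T) j k = if (r <= j)%N then (T.[1])`_(j - r) else 0.
Proof.
move=> hT he; rewrite /coef2 -mulrA coefXnM.
case: (ltnP k A) => hk.
  rewrite coef0; case: (leqP r j) => hr //.
  by rewrite (coef_horner1_homog _ hT) ifF //; apply/negbTE; rewrite -ltnNge; lia.
rewrite coefCM coefXnM; case: (ltnP j r) => hr //.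
rewrite (coef_horner1_homog _ hT) ifT; last by lia.
by have -> : (d - (j - r) = k - A)%N by lia.
Qed.
End BivariateCoefficients.

Lemma size_polyM_leq (K : comNzRingType) (A B : {poly K}) m k :
  (size A <= m.+1)%N -> (size B <= k.+1)%N -> (size (A * B)%R <= (m + k).+1)%N.
Proof.
move=> hA hB; apply: leq_trans (size_polyMleq _ _) _.
have := leq_add hA hB; lia.
Qed.

Lemma size_polyD_leq (K : nzRingType) (A B : {poly K}) m :
  (size A <= m)%N -> (size B <= m)%N -> (size (A + B)%R <= m)%N.
Proof. by move=> hA hB; apply: leq_trans (size_polyD _ _) _; rewrite geq_max hA hB. Qed.

Lemma size_polyB_leq (K : nzRingType) (A B : {poly K}) m :
  (size A <= m)%N -> (size B <= m)%N -> (size (A - B)%R <= m)%N.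
Proof. by move=> hA hB; apply: size_polyD_leq; rewrite ?size_polyN. Qed.

Section Bezoutian.
Variable R : idomainType.
Implicit Types (P Q : {poly {poly R}}) (g : {poly R}).
Local Notation pT := (map_poly (@polyC R)).

Definition s_sub_t : {poly {poly R}} := ('X : {poly R})%:P - 'X.

Lemma size_s_sub_t : size s_sub_t = 2.
Proof. by rewrite /s_sub_t -opprB size_polyN size_XsubC. Qed.

Lemma size_s_sub_tM P m : (size (s_sub_t * P)%R <= m.+1)%N -> (size P <= m)%N.
Proof.
have [->|Pn0] := eqVneq P 0; first by rewrite size_poly0.
have sn : s_sub_t != 0 by rewrite -size_poly_eq0 size_s_sub_t.
by rewrite size_mul // size_s_sub_t.
Qed.

Lemma bezout_polyE F G K :
  F%:P * pT G - pT F * G%:P = K * s_sub_t -> bezout_poly F G = K.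
Proof.
rewrite /bezout_poly => ->; apply: Pdiv.IdomainUnit.mulpK.
by rewrite /s_sub_t -opprB lead_coefN lead_coefXsubC unitrN unitr1.
Qed.

Definition divdiff (n : nat) g : {poly {poly R}} :=
  \poly_(m < n) \poly_(i < n) g`_(i + m + 1).

Lemma coef2_divdiff n g i m :
  coef2 (divdiff n g) i m = if (m < n)%N && (i < n)%N then g`_(i + m + 1) else 0.
Proof.
rewrite /coef2 /divdiff coef_poly; case: ltnP => hm /=; last by rewrite coef0.
by rewrite coef_poly.
Qed.

Lemma divdiffP n g : (size g <= n.+1)%N -> s_sub_t * divdiff n g = g%:P - pT g.
Proof.
move=> hg; have gz k : (n.+1 <= k)%N -> g`_k = 0 by move=> hk; apply: (leq_sizeP _ _ hg).
apply: coef2_ext => i m.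
rewrite /s_sub_t mulrBl coef2B coef2CM coef2XM coef2B coef2C coef2_map_polyC.
rewrite coefXM -!/(coef2 _ _ _) !coef2_divdiff.
case: i => [|i]; case: m => [|m] /=.
- by rewrite !subrr.
- rewrite add0n addn1; case: (ltnP m n) => hm /=; first by rewrite (leq_ltn_trans _ hm).
  by rewrite gz.
- rewrite !subr0 addn0 addn1; case: (ltnP i n) => hi /=; first by rewrite (leq_ltn_trans _ hi).
  by rewrite andbF gz.
- rewrite subrr addnS addn1 addSn addn0 addnS.
  case: (leqP (i + m).+2 n) => him.
    by rewrite !ifT ?subrr //; apply/andP; split; lia.
  by rewrite gz ?if_same ?subrr //; lia.
Qed.
End Bezoutian.

Section LinearFactors.
Variable R : fieldType.
Implicit Types (T : {poly {poly R}}) (g : {poly R}).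

Definition linear_form (s0 : R) : {poly {poly R}} := ('X : {poly R})%:P - s0%:P%:P * 'X.

Lemma linear_form_nonunit s0 : linear_form s0 \isn't a GRing.unit.
Proof.
rewrite poly_unitE negb_and; apply/orP; right.
by rewrite /linear_form coefB coefC coefCM coefX mulr0 subr0 /= poly_unitE size_polyX.
Qed.

Definition homogenize (d : nat) g : {poly {poly R}} :=
  \poly_(j < d.+1) ((g`_(d - j))%:P * 'X^(d - j)).

Lemma coef2_homogenize d g i j :
  coef2 (homogenize d g) i j = if (j <= d)%N && (i + j == d)%N then g`_i else 0.
Proof.
rewrite /coef2 /homogenize coef_poly ltnS; case: leqP => hj /=; last by rewrite coef0.
rewrite coefCM coefXn.
have -> : (i == d - j)%N = (i + j == d)%N by apply/eqP/eqP; lia.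
by case: eqP => [hij|_]; rewrite ?mulr1 ?mulr0 // -hij addnK.
Qed.

Lemma homog_root_dvd d T s0 : homog d.+1 T -> root T.[1] s0 -> pdvd (linear_form s0) T.
Proof.
move=> hT /factor_theorem [g hg].
have hsz : (size g <= d.+1)%N.
  have := size_horner1_homog hT; rewrite hg.
  have [->|gn0] := eqVneq g 0; first by rewrite size_poly0.
  by rewrite size_mul ?polyXsubC_eq0 // size_XsubC addn2.
have gz k : (d.+1 <= k)%N -> g`_k = 0 by move=> hk; apply: (leq_sizeP _ _ hsz).
exists (homogenize d g); apply: coef2_ext => i j.
rewrite (coef2_homog _ _ hT) hg /linear_form mulrBl -mulrA coef2B coef2CM coef2CCM.
rewrite coef2XM coefXM mulrBr coefB coefMX coefMC -!/(coef2 _ _ _) !coef2_homogenize.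
case: i => [|i]; case: j => [|j] /=.
- by rewrite mulr0 subr0.
- rewrite add0n eqSS; case: eqP => [->|_]; last by rewrite andbF mulr0 subr0.
  by rewrite leqnn mulrC.
- rewrite !addn0 eqSS; case: eqP => [->|_]; last by rewrite mulr0 subr0.
  by rewrite (gz d.+1) // mul0r mulr0.
- rewrite !addnS !addSn eqSS; case: eqP => [hij|_]; last by rewrite ?andbF mulr0 subr0.
  by rewrite !ifT 1?mulrC //; lia.
Qed.

Lemma homog_X_dvd d T : homog d.+1 T -> (T.[1])`_d.+1 = 0 -> pdvd 'X T.
Proof.
move=> hT h0.
have /factor_theorem [g hg] : root T 0.
  rewrite /root horner_coef0; apply/eqP/polyP => i.
  by rewrite coef0 -/(coef2 T i 0) (coef2_homog _ _ hT) addn0; case: eqP => [->|].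
by exists g; rewrite hg subr0 mulrC.
Qed.
End LinearFactors.

Section Coprime.
Variable R : closedFieldType.
Variables (d : nat) (a b c : {poly {poly R}}).
Hypotheses (ha : homog d.+1 a) (hb : homog d.+1 b) (hc : homog d.+1 c).
Hypothesis hco : coprime3 a b c.

Lemma coprime3_size_horner1 :
  [\/ size a.[1] = d.+2, size b.[1] = d.+2 | size c.[1] = d.+2].
Proof.
have X_dvd (T : {poly {poly R}}) : homog d.+1 T -> size T.[1] <> d.+2 -> pdvd 'X T.
  move=> hT hs; apply: (homog_X_dvd hT).
  have /leq_sizeP : (size T.[1] <= d.+1)%N.
    by have := size_horner1_homog hT; rewrite leq_eqVlt => /predU1P[].
  exact.
have [h|/eqP na] := eqVneq (size a.[1]) d.+2; first by constructor 1.
have [h|/eqP nb] := eqVneq (size b.[1]) d.+2; first by constructor 2.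
have [h|/eqP nc] := eqVneq (size c.[1]) d.+2; first by constructor 3.
have := hco (X_dvd _ ha na) (X_dvd _ hb nb) (X_dvd _ hc nc).
by rewrite poly_unitE size_polyX.
Qed.

Lemma coprime3_unimodular : exists u : {poly R} * {poly R} * {poly R},
  u.1.1 * a.[1] + u.1.2 * b.[1] + u.2 * c.[1] = 1.
Proof.
set e := gcdp a.[1] b.[1].
have /Bezout_eq1_coprimepP [v hv] : coprimep e c.[1].
  rewrite coprimep_def; apply/negPn/negP => /closed_rootP [s0].
  rewrite !root_gcd => /andP [/andP [ra rb] rc].
  have := hco (homog_root_dvd ha ra) (homog_root_dvd hb rb) (homog_root_dvd hc rc).
  by apply/negP; apply: linear_form_nonunit.
have [u /eqpP [[k1 k2] /= /andP [k1n k2n] hk]] := Bezoutp a.[1] b.[1].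
have he : e = (k2^-1 * k1) *: (u.1 * a.[1] + u.2 * b.[1]).
  by rewrite -scalerA hk scalerA mulVf // scale1r.
exists (v.1 * (k2^-1 * k1)%:P * u.1, v.1 * (k2^-1 * k1)%:P * u.2, v.2) => /=.
transitivity (v.1 * e + v.2 * c.[1]); last exact: hv.
by rewrite he -mul_polyC; ring.
Qed.
End Coprime.

Section SumReindexing.
Variable V : nmodType.
Implicit Type G : nat -> V.

Lemma sum_ord_widen0 G m N : (m <= N)%N ->
  (forall r, (m <= r < N)%N -> G r = 0) -> \sum_(r < m) G r = \sum_(r < N) G r.
Proof.
move=> hm hG; rewrite (big_ord_widen N G hm) big_mkcond /=.
by apply: eq_bigr => r _; case: ltnP => // h; rewrite hG // h ltn_ord.
Qed.

Lemma sum_ord_trunc G j B : (forall r, (B <= r)%N -> G r = 0) ->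
  \sum_(r < j.+1) G r = \sum_(r < B) (if (r <= j)%N then G r else 0).
Proof.
move=> hG; set H := fun r => if (r <= j)%N then G r else 0.
transitivity (\sum_(r < j.+1) H r); first by apply: eq_bigr => r _; rewrite /H -ltnS ltn_ord.
rewrite (@sum_ord_widen0 H j.+1 (j.+1 + B)) ?leq_addr //; last first.
  by move=> r /andP [hr _]; rewrite /H leqNgt hr.
rewrite [RHS](@sum_ord_widen0 H B (j.+1 + B)) ?leq_addl //.
by move=> r /andP [hr _]; rewrite /H hG ?if_same.
Qed.

Lemma sum_ord_split G N M : (M <= N)%N ->
  \sum_(r < N) G r = \sum_(r < N - M) G r + \sum_(k < M) G (N - M + k)%N.
Proof.
move=> hM; rewrite -(big_mkord xpredT G) (@big_cat_nat _ _ _ (N - M)) ?leq_subr //=.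
rewrite -{2}[(N - M)%N]add0n big_addn (subKn hM) !big_mkord.
by congr (_ + _); apply: eq_bigr => k _; rewrite addnC.
Qed.
End SumReindexing.

Section DivdiffKernel.
Variables (R : fieldType) (n : nat) (v : 'rV[R]_n).
Local Notation pT := (map_poly (@polyC R)).

Definition row_divdiff (g : {poly R}) : {poly R} :=
  \poly_(m < n) \sum_(i < n) v 0 i * g`_(i + m + 1).

Lemma coef_row_divdiffM g (Y : {poly R}) r :
  \sum_(i < n) v 0 i * coef2 (divdiff n g * pT Y) i r = (row_divdiff g * Y)`_r.
Proof.
transitivity (\sum_(m < r.+1) \sum_(i < n) v 0 i * (Y`_(r - m) * coef2 (divdiff n g) i m)).
  rewrite exchange_big; apply: eq_bigr => i _.
  by rewrite [divdiff n g * _]mulrC coef2_map_polyCM mulr_sumr.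
rewrite coefM; apply: eq_bigr => m _; rewrite coef_poly; case: ltnP => hm.
  by rewrite mulr_suml; apply: eq_bigr => i _; rewrite coef2_divdiff hm ltn_ord mulrCA mulrC.
by rewrite mul0r big1 // => i _; rewrite coef2_divdiff ltnNge hm /= !mulr0.
Qed.

(* The coefficient of degree n - 1 - i of [row_divdiff g] is g_n v_i plus terms
   in the v_j with j < i, so the v_i vanish one after the other. *)
Lemma row_divdiff_eq0 (g : {poly R}) : size g = n.+1 -> row_divdiff g = 0 -> v = 0.
Proof.
move=> hs hE.
have gn : g`_n != 0.
  by rewrite -[n]/(n.+1.-1) -hs -lead_coefE lead_coef_eq0 -size_poly_eq0 hs.
have gz k : (n < k)%N -> g`_k = 0 by move=> hk; apply: (leq_sizeP _ _ (eq_leq hs)).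
apply/rowP => i; rewrite mxE.
elim/ltn_ind: {i}(nat_of_ord i) {-2}i (erefl (nat_of_ord i)) => k IH i hi.
have hm : (n - 1 - i < n)%N by have := ltn_ord i; lia.
have := congr1 (fun P : {poly R} => P`_(n - 1 - i)) hE; rewrite coef0 coef_poly hm.
rewrite (bigD1 i) //= big1 ?addr0 => [|j hj].
  have -> : (i + (n - 1 - i) + 1 = n)%N by have := ltn_ord i; lia.
  by move/eqP; rewrite mulf_eq0 (negbTE gn) orbF => /eqP.
case: (ltngtP j i) => hji.
- by rewrite (IH j) ?mul0r // -hi.
- by rewrite gz ?mulr0 //; lia.
- by move: hj; rewrite (val_inj hji) eqxx.
Qed.
End DivdiffKernel.

Section BezoutSylvester.
Variable R : closedFieldType.
Variables (d mu : nat) (a b c : {poly {poly R}}) (p q : 'I_3 -> {poly {poly R}}).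
Local Notation n := d.+1.
Hypotheses (ha : homog n a) (hb : homog n b) (hc : homog n c).
Hypothesis hco : coprime3 a b c.
Hypothesis hmu_le : (mu <= n - mu)%N.
Hypotheses (hp : forall k, homog mu (p k)) (hq : forall k, homog (n - mu) (q k)).
Hypotheses (syzp : syz (abc a b c) p) (syzq : syz (abc a b c) q).
Hypothesis hind : forall h1 h2, (forall k, h1 * p k + h2 * q k = 0) -> h1 = 0 /\ h2 = 0.
Local Notation pT := (map_poly (@polyC R)).

Let f0 := a.[1]. Let f1 := b.[1]. Let f2 := c.[1].
Let P0 := (p 0%:R).[1]. Let P1 := (p 1%:R).[1]. Let P2 := (p 2%:R).[1].
Let Q0 := (q 0%:R).[1]. Let Q1 := (q 1%:R).[1]. Let Q2 := (q 2%:R).[1].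
Let W0 := P1 * Q2 - P2 * Q1.
Let W1 := P2 * Q0 - P0 * Q2.
Let W2 := P0 * Q1 - P1 * Q0.

Let mu_n : (mu + (n - mu))%N = n.
Proof. by rewrite subnKC // (leq_trans hmu_le (leq_subr _ _)). Qed.

Lemma syz_horner1 (r : 'I_3 -> {poly {poly R}}) : syz (abc a b c) r ->
  (r 0%:R).[1] * f0 + (r 1%:R).[1] * f1 + (r 2%:R).[1] * f2 = 0.
Proof.
by rewrite /syz sum_ord3 => /(congr1 (horner^~ 1)); rewrite !hornerD !hornerM horner0.
Qed.

Lemma syz_P : P0 * f0 + P1 * f1 + P2 * f2 = 0.
Proof. exact: syz_horner1 syzp. Qed.

Lemma syz_Q : Q0 * f0 + Q1 * f1 + Q2 * f2 = 0.
Proof. exact: syz_horner1 syzq. Qed.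

Lemma cross_neq0 : ~ [/\ W0 = 0, W1 = 0 & W2 = 0].
Proof.
case=> h0 h1 h2.
have hcross (i j k l : 'I_3) : (p i * q j - p k * q l).[1] = 0 -> p i * q j - p k * q l = 0.
  by apply: (@homog_horner1_eq0 _ n); rewrite -mu_n; apply: homogB; apply: homogM;
    first [exact: hp | exact: hq].
have := cross_eq0_syz (hcross _ _ _ _ _) (hcross _ _ _ _ _) (hcross _ _ _ _ _).
rewrite !hornerD !hornerN !hornerM => /(_ h0 h1 h2) hsyz.
have p0 i : p i = 0.
  have hrel k : q i * p k + - p i * q k = 0 by rewrite mulNr hsyz.
  by have [_ /eqP] := hind hrel; rewrite oppr_eq0 => /eqP.
have hrel k : 1 * p k + 0 * q k = 0 by rewrite p0 mulr0 mul0r addr0.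
by have [/eqP] := hind hrel; rewrite oner_eq0.
Qed.

Let size_P k : (size (p k).[1] <= mu.+1)%N.
Proof. exact: size_horner1_homog (@hp k). Qed.

Let size_Q k : (size (q k).[1] <= (n - mu).+1)%N.
Proof. exact: size_horner1_homog (@hq k). Qed.

Lemma size_cross :
  [/\ (size W0 <= n + 1)%N, (size W1 <= n + 1)%N & (size W2 <= n + 1)%N].
Proof.
have hsize (i j k l : 'I_3) :
    (size ((p i).[1] * (q j).[1] - (p k).[1] * (q l).[1])%R <= n + 1)%N.
  rewrite addn1 -mu_n.
  by apply: size_polyB_leq; apply: size_polyM_leq; rewrite ?size_P ?size_Q.
by split; apply: hsize.
Qed.

Lemma parallel_f (E0 E1 E2 : {poly R}) m :
  E0 * f1 = E1 * f0 -> E0 * f2 = E2 * f0 -> E1 * f2 = E2 * f1 ->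
  [/\ (size E0 <= n + m)%N, (size E1 <= n + m)%N & (size E2 <= n + m)%N] ->
  exists2 g : {poly R}, (size g <= m)%N & [/\ E0 = g * f0, E1 = g * f1 & E2 = g * f2].
Proof.
move=> h01 h02 h12 [s0 s1 s2].
have [[[u0 u1] u2] /= hu] := coprime3_unimodular ha hb hc hco.
have [e0 e1 e2] := unimodular_parallel hu h01 h02 h12.
exists (u0 * E0 + u1 * E1 + u2 * E2) => //.
set g := u0 * E0 + _ + _ in e0 e1 e2 *.
have [->|gn0] := eqVneq g 0; first by rewrite size_poly0.
have size_g (fk Ek : {poly R}) :
    size fk = n.+1 -> Ek = g * fk -> (size Ek <= n + m)%N -> (size g <= m)%N.
  move=> hs ->; rewrite size_mul ?hs //; last by rewrite -size_poly_eq0 hs.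
  by rewrite addnS /= addnC leq_add2l.
by case: (coprime3_size_horner1 ha hb hc hco) => hf;
  [exact: size_g hf e0 s0 | exact: size_g hf e1 s1 | exact: size_g hf e2 s2].
Qed.

Lemma cross_scaled : exists2 l : R, l != 0 &
  [/\ W0 = l%:P * f0, W1 = l%:P * f1 & W2 = l%:P * f2].
Proof.
have [hx0 hx1 hx2] : [/\ W0 * f1 = W1 * f0, W0 * f2 = W2 * f0 & W1 * f2 = W2 * f1].
  by apply: cross_parallel;
    rewrite ![f0 * _]mulrC ![f1 * _]mulrC ![f2 * _]mulrC ?syz_P ?syz_Q.
have [g gs [e0 e1 e2]] := parallel_f hx0 hx1 hx2 size_cross.
exists g`_0.
  apply/eqP => h0; apply: cross_neq0.
  by rewrite e0 e1 e2 (size1_polyC gs) h0 polyC0 !mul0r.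
by rewrite -(size1_polyC gs).
Qed.

Section Factor.
Variable l : R.
Hypotheses (hl : l != 0) (hW0 : W0 = l%:P * f0) (hW1 : W1 = l%:P * f1) (hW2 : W2 = l%:P * f2).

Definition divdiff_q :=
  divdiff n f0 * pT Q0 + divdiff n f1 * pT Q1 + divdiff n f2 * pT Q2.
Definition divdiff_p :=
  divdiff n f0 * pT P0 + divdiff n f1 * pT P1 + divdiff n f2 * pT P2.

Let s_sub_t_divdiff (T : {poly {poly R}}) : homog n T ->
  s_sub_t R * divdiff n T.[1] = T.[1]%:P - pT T.[1].
Proof. by move=> hT; apply: divdiffP; apply: size_horner1_homog hT. Qed.

Lemma s_sub_t_divdiff_q :
  s_sub_t R * divdiff_q = f0%:P * pT Q0 + f1%:P * pT Q1 + f2%:P * pT Q2.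
Proof.
apply: divdiff_dot (s_sub_t_divdiff ha) (s_sub_t_divdiff hb) (s_sub_t_divdiff hc) _.
by have := congr1 pT syz_Q; rewrite rmorph0 !rmorphD !rmorphM => h; exact: h.
Qed.

Lemma s_sub_t_divdiff_p :
  s_sub_t R * divdiff_p = f0%:P * pT P0 + f1%:P * pT P1 + f2%:P * pT P2.
Proof.
apply: divdiff_dot (s_sub_t_divdiff ha) (s_sub_t_divdiff hb) (s_sub_t_divdiff hc) _.
by have := congr1 pT syz_P; rewrite rmorph0 !rmorphD !rmorphM => h; exact: h.
Qed.

Let size_CM_map_polyC (fk Y : {poly R}) m :
  (size Y <= m.+1)%N -> (size (fk%:P * pT Y)%R <= m.+1)%N.
Proof.
move=> hY; rewrite -[m]add0n; apply: size_polyM_leq; first exact: size_polyC_leq1.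
by rewrite size_map_polyC.
Qed.

Lemma size_divdiff_q : (size divdiff_q <= n - mu)%N.
Proof.
apply: size_s_sub_tM; rewrite s_sub_t_divdiff_q.
by do 2?apply: size_polyD_leq; apply: size_CM_map_polyC; apply: size_Q.
Qed.

Lemma size_divdiff_p : (size divdiff_p <= mu)%N.
Proof.
apply: size_s_sub_tM; rewrite s_sub_t_divdiff_p.
by do 2?apply: size_polyD_leq; apply: size_CM_map_polyC; apply: size_P.
Qed.

Definition bezout_factor (x : 'I_3 -> R) :=
  (l^-1 * x 2%:R)%:P%:P * (pT (lin x p).[1] * divdiff_q - pT (lin x q).[1] * divdiff_p).

Lemma bezoutian_factor (x : 'I_3 -> R) :
  (x 2%:R *: f0 - x 0%:R *: f2)%:P * pT (x 2%:R *: f1 - x 1%:R *: f2)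
  - pT (x 2%:R *: f0 - x 0%:R *: f2) * (x 2%:R *: f1 - x 1%:R *: f2)%:P
  = bezout_factor x * s_sub_t R.
Proof.
have pTC (r : R) : pT r%:P = r%:P%:P by rewrite map_polyC.
have lW (W fk : {poly R}) : W = l%:P * fk -> l%:P%:P * pT fk = pT W.
  by move=> ->; rewrite rmorphM /= pTC.
have lW0 : l%:P%:P * pT f0 = pT P1 * pT Q2 - pT P2 * pT Q1.
  by rewrite (lW _ _ hW0) /W0 rmorphB !rmorphM.
have lW1 : l%:P%:P * pT f1 = pT P2 * pT Q0 - pT P0 * pT Q2.
  by rewrite (lW _ _ hW1) /W1 rmorphB !rmorphM.
have lW2 : l%:P%:P * pT f2 = pT P0 * pT Q1 - pT P1 * pT Q0.
  by rewrite (lW _ _ hW2) /W2 rmorphB !rmorphM.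
have := bezoutian_cross (x 0%:R)%:P%:P (x 1%:R)%:P%:P (x 2%:R)%:P%:P
  f0%:P f1%:P f2%:P lW0 lW1 lW2.
rewrite -s_sub_t_divdiff_q -s_sub_t_divdiff_p => hN.
have lP0 : l%:P%:P != 0 :> {poly {poly R}} by rewrite !polyC_eq0.
apply: (mulfI lP0); rewrite -!mul_polyC !rmorphB !rmorphM /= !pTC hN.
rewrite /bezout_factor !horner1_lin !rmorphD !rmorphM /= !pTC.
have : (l%:P)%:P * ((l^-1)%:P)%:P = 1 :> {poly {poly R}} by rewrite -!polyCM mulfV.
move: (l%:P)%:P ((l^-1)%:P)%:P => L Li hL.
by rewrite -[LHS]mul1r -hL; ring.
Qed.

(* Column r of N carries the t^r-coefficients of D.Q / l for r < n - mu (facing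
   the rows of S built from Lp), and those of -D.P / l otherwise. *)
Definition sylv_factor : 'M[R]_n := \matrix_(i < n, r < n)
  if (r < n - mu)%N then l^-1 * coef2 divdiff_q i r
  else - (l^-1 * coef2 divdiff_p i (r - (n - mu))).

Let coef2_divdiff_q i r : (n - mu <= r)%N -> coef2 divdiff_q i r = 0.
Proof. by move=> hr; rewrite /coef2 (leq_sizeP _ _ size_divdiff_q) ?coef0. Qed.

Let coef2_divdiff_p i r : (mu <= r)%N -> coef2 divdiff_p i r = 0.
Proof. by move=> hr; rewrite /coef2 (leq_sizeP _ _ size_divdiff_p) ?coef0. Qed.

Let sylvE x (r j : 'I_n) : sylv n mu p q x r j =
  if (r < n - mu)%N then (if (r <= j)%N then ((lin x p).[1])`_(j - r) else 0)
  else if (r - (n - mu) <= j)%N then ((lin x q).[1])`_(j - (r - (n - mu))) else 0.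
Proof.
rewrite mxE /=; have := ltn_ord j; have := ltn_ord r.
case: (ltnP r (n - mu)) => hr hrn hjn.
  by rewrite (coef2_shift_homog (homog_lin (x := x) hp)) //; lia.
by rewrite (coef2_shift_homog (homog_lin (x := x) hq)) //; lia.
Qed.

Lemma bezout_mx_sylv x :
  bezout_mx n (x 2%:R *: f0 - x 0%:R *: f2) (x 2%:R *: f1 - x 1%:R *: f2)
  = x 2%:R *: (sylv_factor *m sylv n mu p q x).
Proof.
apply/matrixP => i j; rewrite mxE (bezout_polyE (bezoutian_factor x)) !mxE.
rewrite /bezout_factor coef2CCM coef2B !coef2_map_polyCM.
set Lp := (lin x p).[1]; set Lq := (lin x q).[1].
pose sv r := if (r < n - mu)%N then (if (r <= j)%N then Lp`_(j - r) else 0)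
  else if (r - (n - mu) <= j)%N then Lq`_(j - (r - (n - mu))) else 0.
pose nv r := if (r < n - mu)%N then l^-1 * coef2 divdiff_q i r
  else - (l^-1 * coef2 divdiff_p i (r - (n - mu))).
rewrite (eq_bigr (fun r : 'I_n => nv r * sv r)) => [|r _]; last by rewrite sylvE mxE.
rewrite (@sum_ord_split _ (fun r => nv r * sv r) n mu); last first.
  exact: leq_trans hmu_le (leq_subr _ _).
rewrite (@sum_ord_trunc _ (fun r => Lp`_(j - r) * coef2 divdiff_q i r) j (n - mu)); last first.
  by move=> r hr; rewrite coef2_divdiff_q // mulr0.
rewrite (@sum_ord_trunc _ (fun r => Lq`_(j - r) * coef2 divdiff_p i r) j mu); last first.
  by move=> r hr; rewrite coef2_divdiff_p // mulr0.
have e1 : \sum_(r < n - mu) nv r * sv r = l^-1 *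
    \sum_(r < n - mu) (if (r <= j)%N then Lp`_(j - r) * coef2 divdiff_q i r else 0).
  rewrite mulr_sumr; apply: eq_bigr => r _; rewrite /nv /sv ltn_ord.
  by case: ifP => _; rewrite ?mulr0 //; ring.
have e2 : \sum_(k < mu) nv (n - mu + k)%N * sv (n - mu + k)%N = - (l^-1 *
    \sum_(k < mu) (if (k <= j)%N then Lq`_(j - k) * coef2 divdiff_p i k else 0)).
  rewrite mulr_sumr -sumrN; apply: eq_bigr => k _; rewrite /nv /sv ltnNge leq_addr /= addKn.
  by case: ifP => _; rewrite ?mulr0 ?oppr0 //; ring.
by rewrite e1 e2; ring.
Qed.

Lemma sylv_factor_kernel (v : 'rV[R]_n) : v *m sylv_factor = 0 ->
  (forall r, \sum_(i < n) v 0 i * coef2 divdiff_q i r = 0) /\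
  (forall r, \sum_(i < n) v 0 i * coef2 divdiff_p i r = 0).
Proof.
move=> hv; have hl' : l^-1 != 0 by rewrite invr_eq0.
have hcol (r : 'I_n) : \sum_(i < n) v 0 i * sylv_factor i r = 0.
  by move/matrixP: hv => /(_ 0 r); rewrite !mxE.
split=> r.
- have [hr|hr] := ltnP r (n - mu); last first.
    by rewrite big1 // => i _; rewrite coef2_divdiff_q ?mulr0.
  have := hcol (Ordinal (leq_trans hr (leq_subr _ _))).
  under eq_bigr do rewrite mxE /= hr mulrCA.
  by rewrite -mulr_sumr => /eqP; rewrite mulf_eq0 (negbTE hl') => /eqP.
- have [hr|hr] := ltnP r mu; last first.
    by rewrite big1 // => i _; rewrite coef2_divdiff_p ?mulr0.
  have hrn : (n - mu + r < n)%N by lia.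
  have := hcol (Ordinal hrn).
  under eq_bigr do rewrite mxE /= ltnNge leq_addr /= addKn mulrN mulrCA.
  by rewrite sumrN -mulr_sumr => /eqP; rewrite oppr_eq0 mulf_eq0 (negbTE hl') => /eqP.
Qed.

Lemma sylv_factor_unit : sylv_factor \in unitmx.
Proof.
rewrite unitmxE unitfE; apply/negP => /det0P [v /eqP vn0 /sylv_factor_kernel [kq kp]].
apply: vn0; set E0 := row_divdiff v f0; set E1 := row_divdiff v f1; set E2 := row_divdiff v f2.
have dotQ : E0 * Q0 + E1 * Q1 + E2 * Q2 = 0.
  apply/polyP => r; rewrite coef0 !coefD -!coef_row_divdiffM -!big_split /= -[RHS](kq r).
  by apply: eq_bigr => i _; rewrite -!mulrDr /divdiff_q !coef2D.
have dotP : E0 * P0 + E1 * P1 + E2 * P2 = 0.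
  apply/polyP => r; rewrite coef0 !coefD -!coef_row_divdiffM -!big_split /= -[RHS](kp r).
  by apply: eq_bigr => i _; rewrite -!mulrDr /divdiff_p !coef2D.
have [c0 c1 c2] := cross_parallel dotP dotQ.
rewrite -/W0 -/W1 -/W2 hW0 hW1 hW2 -!mulrA in c0 c1 c2.
have lP : l%:P != 0 by rewrite polyC_eq0.
have [g gs [e0 e1 e2]] : exists2 g : {poly R}, (size g <= 0)%N &
    [/\ E0 = g * f0, E1 = g * f1 & E2 = g * f2].
  apply: parallel_f; rewrite ?addn0 ?size_poly //.
  - by rewrite mulrC -(mulfI lP c0) mulrC.
  - by rewrite mulrC -(mulfI lP c1) mulrC.
  - by rewrite mulrC -(mulfI lP c2) mulrC.
have g0 : g = 0 by apply/size_poly_leq0P.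
case: (coprime3_size_horner1 ha hb hc hco) => hf; apply: (row_divdiff_eq0 hf).
- by rewrite -/E0 e0 g0 mul0r.
- by rewrite -/E1 e1 g0 mul0r.
- by rewrite -/E2 e2 g0 mul0r.
Qed.
End Factor.

Theorem bezout_mx_sylv_factor : exists N : 'M[R]_n, N \in unitmx /\
  forall x : 'I_3 -> R,
    bezout_mx n (x 2%:R *: a.[1] - x 0%:R *: c.[1]) (x 2%:R *: b.[1] - x 1%:R *: c.[1])
    = x 2%:R *: (N *m sylv n mu p q x).
Proof.
have [l hl [hW0 hW1 hW2]] := cross_scaled.
exists (sylv_factor l); split; first exact: sylv_factor_unit hl hW0 hW1 hW2.
exact: bezout_mx_sylv hl hW0 hW1 hW2.
Qed.
End BezoutSylvester.

Theorem proposition6p1 (R : closedFieldType) (n mu : nat)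
    (a b c : {poly {poly R}}) (p q : 'I_3 -> {poly {poly R}}) :
  [pchar R] =i pred0 ->
  (3 <= n)%N ->
  homog n a -> homog n b -> homog n c ->
  coprime3 a b c ->
  birational_param a b c ->
  mu_basis n mu (abc a b c) p q ->
  exists N : 'M[R]_n, N \in unitmx /\
    forall x : 'I_3 -> R,
      bezout_mx n (x 2%:R *: a.[1] - x 0%:R *: c.[1])
                  (x 2%:R *: b.[1] - x 1%:R *: c.[1])
      = x 2%:R *: (N *m sylv n mu p q x).
Proof.
move=> _; case: n => [//|d] _ ha hb hc hco _ [hle [hp hq] [sp sq] _ hind].
exact: bezout_mx_sylv_factor ha hb hc hco hle hp hq sp sq hind.
Qed.
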